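(* Let $\mathfrak{P}$ be a compactness-like topological property and $X$ a space. Then $\lambda_\mathfrak{P}X=\beta X$ if and only if $X$ has $\mathfrak{P}$.
   Context: All spaces are completely regular Hausdorff; $\beta X$ is the Stone–Čech compactification. $\mathrm{Coz}(X)$ is the set of cozero-sets of $X$. $\lambda_\mathfrak{P}X=\bigcup\{\mathrm{int}_{\beta X}\mathrm{cl}_{\beta X}C: C\in\mathrm{Coz}(X),\ \mathrm{cl}_XC\text{ has }\mathfrak{P}\}$. A topological property is compactness-like if it is hereditary to clopen subspaces, finitely additive (finite disjoint unions of closed subspaces with $\mathfrak{P}$ have $\mathfrak{P}$), invariant and inverse invariant under perfect surjections, and satisfies Mrówka's condition (W): if a space $Z$ has a point $p$ with an open base $\mathscr{B}$ at $p$ such that $Z\setminus B$ has $\mathfrak{P}$ for all $B\in\mathscr{B}$, then $Z$ has $\mathfrak{P}$. *)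

From Stdlib Require Import Reals List.

Record space := Space {
  pt :> Type;
  is_open : (pt -> Prop) -> Prop;
  open_ext : forall U V : pt -> Prop, (forall x, U x <-> V x) -> is_open U -> is_open V;
  open_full : is_open (fun _ => True);
  open_inter : forall U V, is_open U -> is_open V -> is_open (fun x => U x /\ V x);
  open_union : forall (I : Type) (F : I -> pt -> Prop),
      (forall i, is_open (F i)) -> is_open (fun x => exists i, F i x)
}.

Definition closed (X : space) (A : X -> Prop) : Prop := is_open X (fun x => ~ A x).

Definition closure (X : space) (A : X -> Prop) (x : X) : Prop :=
  forall U, is_open X U -> U x -> exists y, U y /\ A y.

Definition interior (X : space) (A : X -> Prop) (x : X) : Prop :=
  exists U, is_open X U /\ U x /\ forall y, U y -> A y.

Definition image {X Y : Type} (f : X -> Y) (A : X -> Prop) (y : Y) : Prop :=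
  exists x, A x /\ f x = y.

Definition sub_open (X : space) (A : X -> Prop) (V : {x : X | A x} -> Prop) : Prop :=
  exists U, is_open X U /\ forall x, V x <-> U (proj1_sig x).

Lemma sub_open_ext (X : space) (A : X -> Prop) :
  forall U V : {x : X | A x} -> Prop, (forall x, U x <-> V x) -> sub_open X A U -> sub_open X A V.
Proof.
  intros U V H [W [HW HU]]. exists W. split; [exact HW|].
  intros x. rewrite <- H. apply HU.
Qed.

Lemma sub_open_full (X : space) (A : X -> Prop) : sub_open X A (fun _ => True).
Proof. exists (fun _ => True). split; [apply open_full | tauto]. Qed.

Lemma sub_open_inter (X : space) (A : X -> Prop) :
  forall U V, sub_open X A U -> sub_open X A V -> sub_open X A (fun x => U x /\ V x).
Proof.
  intros U V [U' [HU' HU]] [V' [HV' HV]].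
  exists (fun x => U' x /\ V' x). split; [apply open_inter; assumption|].
  intros x. rewrite HU, HV. tauto.
Qed.

Lemma sub_open_union (X : space) (A : X -> Prop) :
  forall (I : Type) (F : I -> {x : X | A x} -> Prop),
    (forall i, sub_open X A (F i)) -> sub_open X A (fun x => exists i, F i x).
Proof.
  intros I F HF.
  pose (J := {p : I * (X -> Prop) | is_open X (snd p) /\
                 forall x, F (fst p) x <-> snd p (proj1_sig x)}).
  exists (fun y => exists j : J, snd (proj1_sig j) y). split.
  - apply (open_union X J (fun j => snd (proj1_sig j))).
    intros j. exact (proj1 (proj2_sig j)).
  - intros x. split.
    + intros [i Hi]. destruct (HF i) as [U [HU HiU]].
      exists (exist _ (i, U) (conj HU HiU)). simpl. apply HiU. exact Hi.
    + intros [[[i U] [HU HiU]] Hx]. simpl in Hx. exists i. apply (proj2 (HiU x)). exact Hx.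
Qed.

Definition subspace (X : space) (A : X -> Prop) : space :=
  Space {x : X | A x} (sub_open X A) (sub_open_ext X A) (sub_open_full X A)
        (sub_open_inter X A) (sub_open_union X A).

Definition continuous {X Y : space} (f : X -> Y) : Prop :=
  forall U, is_open Y U -> is_open X (fun x => U (f x)).

Definition closed_map {X Y : space} (f : X -> Y) : Prop :=
  forall F, closed X F -> closed Y (image f F).

Definition compact (X : space) : Prop :=
  forall (I : Type) (U : I -> X -> Prop),
    (forall i, is_open X (U i)) -> (forall x, exists i, U i x) ->
    exists l : list I, forall x, exists i, In i l /\ U i x.

Definition perfect_surj {X Y : space} (f : X -> Y) : Prop :=
  continuous f /\ closed_map f /\ (forall y, exists x, f x = y) /\
  (forall y, compact (subspace X (fun x => f x = y))).

Definition hausdorff (X : space) : Prop :=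
  forall x y : X, x <> y -> exists U V, is_open X U /\ is_open X V /\ U x /\ V y /\
    forall z, ~ (U z /\ V z).

(** Continuity of real-valued maps (w.r.t. the usual topology of R, which is
    generated by the open rays). *)
Definition real_continuous (X : space) (f : X -> R) : Prop :=
  forall a : R, is_open X (fun x => Rlt a (f x)) /\ is_open X (fun x => Rlt (f x) a).

Definition completely_regular (X : space) : Prop :=
  forall (F : X -> Prop) (x : X), closed X F -> ~ F x ->
    exists f : X -> R, real_continuous X f /\ (forall y, Rle 0 (f y) /\ Rle (f y) 1) /\
      f x = 0%R /\ forall y, F y -> f y = 1%R.

Definition tychonoff (X : space) : Prop := hausdorff X /\ completely_regular X.

Definition cozero (X : space) (C : X -> Prop) : Prop :=
  exists f : X -> R, real_continuous X f /\ forall x, C x <-> f x <> 0%R.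

Definition embedding {X Y : space} (e : X -> Y) : Prop :=
  continuous e /\ (forall x1 x2, e x1 = e x2 -> x1 = x2) /\
  forall U, is_open X U -> exists V, is_open Y V /\ forall x, U x <-> V (e x).

Definition stone_cech (X Y : space) (e : X -> Y) : Prop :=
  compact Y /\ hausdorff Y /\ embedding e /\ (forall y, closure Y (image e (fun _ => True)) y) /\
  forall (K : space) (f : X -> K), compact K -> hausdorff K -> continuous f ->
    exists g : Y -> K, continuous g /\ forall x, g (e x) = f x.

(** Topological properties are predicates on spaces; only their values on
    (completely regular Hausdorff) spaces matter. *)
Definition clopen_hereditary (P : space -> Prop) : Prop :=
  forall Z : space, tychonoff Z -> P Z ->
    forall A : Z -> Prop, is_open Z A -> closed Z A -> P (subspace Z A).

Definition finitely_additive (P : space -> Prop) : Prop :=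
  forall Z : space, tychonoff Z -> forall (n : nat) (A : nat -> Z -> Prop),
    (forall i, (i < n)%nat -> closed Z (A i)) ->
    (forall i j x, (i < n)%nat -> (j < n)%nat -> A i x -> A j x -> i = j) ->
    (forall x, exists i, (i < n)%nat /\ A i x) ->
    (forall i, (i < n)%nat -> P (subspace Z (A i))) ->
    P Z.

Definition perfect_invariant (P : space -> Prop) : Prop :=
  forall (Z W : space) (f : Z -> W), tychonoff Z -> tychonoff W -> perfect_surj f ->
    (P Z <-> P W).

Definition open_base_at (Z : space) (p : Z) (B : (Z -> Prop) -> Prop) : Prop :=
  (forall U, B U -> is_open Z U /\ U p) /\
  (forall V, is_open Z V -> V p -> exists U, B U /\ forall z, U z -> V z).

Definition condition_W (P : space -> Prop) : Prop :=
  forall (Z : space) (p : Z) (B : (Z -> Prop) -> Prop), tychonoff Z -> open_base_at Z p B ->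
    (forall U, B U -> P (subspace Z (fun z => ~ U z))) -> P Z.

Definition compactness_like (P : space -> Prop) : Prop :=
  clopen_hereditary P /\ finitely_additive P /\ perfect_invariant P /\ condition_W P.

(** lambda_P X, as a subset of beta X = Y (X identified with e(X)). *)
Definition lambdaP (P : space -> Prop) (X Y : space) (e : X -> Y) (y : Y) : Prop :=
  exists C : X -> Prop, cozero X C /\ P (subspace X (closure X C)) /\
    interior Y (closure Y (image e C)) y.

(* If lambda_P X is all of beta X, compactness of beta X yields finitely many cozero-sets
   C_1, ..., C_n whose closures in X have P and cover X. The disjoint sum of these closures
   has P by finite additivity (each summand is homeomorphic to some cl_X C_i, and
   homeomorphisms are perfect), and it maps perfectly onto X, so X has P. Conversely, if X
   has P then C = X is a cozero-set whose closure has P, and int cl_{beta X} X = beta X. *)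

From Stdlib Require Import Reals List Classical ProofIrrelevance Lia Lra.

Lemma proj1_sig_inj (T : Type) (A : T -> Prop) (a b : {x : T | A x}) :
  proj1_sig a = proj1_sig b -> a = b.
Proof. apply eq_sig_hprop. intros; apply proof_irrelevance. Qed.

Section OpenSets.

Variable X : space.

Lemma open_const (Q : Prop) : is_open X (fun _ => Q).
Proof.
  apply (open_ext X (fun x => exists _ : Q, True)).
  - intros x; split; [intros [q _]; exact q | intros q; exists q; exact I].
  - apply (open_union X Q (fun _ _ => True)). intros _; apply open_full.
Qed.

Lemma open_or (U V : X -> Prop) :
  is_open X U -> is_open X V -> is_open X (fun x => U x \/ V x).
Proof.
  intros HU HV.
  apply (open_ext X (fun x => exists b : bool, (if b then U else V) x)).
  - intros x; split.
    + intros [[|] H]; tauto.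
    + intros [H|H]; [exists true | exists false]; exact H.
  - apply open_union. intros [|]; assumption.
Qed.

Lemma open_fin_inter (n : nat) (G : nat -> X -> Prop) :
  (forall i, (i < n)%nat -> is_open X (G i)) ->
  is_open X (fun x => forall i, (i < n)%nat -> G i x).
Proof.
  induction n as [|n IH]; intros HG.
  - apply (open_ext X (fun _ => True)); [|apply open_full].
    intros x; split; [intros _ i Hi; lia | intros _; exact I].
  - apply (open_ext X (fun x => (forall i, (i < n)%nat -> G i x) /\ G n x)).
    + intros x; split.
      * intros [Hlt Hn] i Hi.
        destruct (Nat.eq_dec i n) as [->|Hne]; [exact Hn | apply Hlt; lia].
      * intros H; split; [intros i Hi; apply H; lia | apply H; lia].
    + apply open_inter; [apply IH; intros i Hi; apply HG; lia | apply HG; lia].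
Qed.

Lemma closure_closed (A : X -> Prop) : closed X (closure X A).
Proof.
  unfold closed.
  apply (open_ext X (fun x => exists U : {U : X -> Prop | is_open X U /\ forall y, U y -> ~ A y},
                               proj1_sig U x)).
  - intros x; split.
    + intros [[U [HU HA]] Ux] Hcl. destruct (Hcl U HU Ux) as [y [Uy Ay]]. exact (HA y Uy Ay).
    + intros Hncl. apply not_all_ex_not in Hncl as [U Hn].
      apply imply_to_and in Hn as [HU Hn]. apply imply_to_and in Hn as [Ux Hn].
      exists (exist _ U (conj HU (fun y Uy Ay => Hn (ex_intro _ y (conj Uy Ay))))). exact Ux.
  - apply open_union. intros U; exact (proj1 (proj2_sig U)).
Qed.

Lemma interior_open (A : X -> Prop) : is_open X (interior X A).
Proof.
  apply (open_ext X (fun x => exists U : {U : X -> Prop | is_open X U /\ forall y, U y -> A y},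
                               proj1_sig U x)).
  - intros x; split.
    + intros [[U [HU HA]] Ux]. exists U. auto.
    + intros [U [HU [Ux HA]]]. exists (exist _ U (conj HU HA)). exact Ux.
  - apply open_union. intros U; exact (proj1 (proj2_sig U)).
Qed.

End OpenSets.

Lemma closure_embedding (X Y : space) (e : X -> Y) (C : X -> Prop) (x : X) :
  embedding e -> closure Y (image e C) (e x) -> closure X C x.
Proof.
  intros [_ [_ Hopen]] Hcl U HU Ux. destruct (Hopen U HU) as [V [HV HUV]].
  destruct (Hcl V HV (proj1 (HUV x) Ux)) as [y [Vy [x' [Cx' <-]]]].
  exists x'. split; [apply HUV, Vy | exact Cx'].
Qed.

Lemma subspace_hausdorff (X : space) (A : X -> Prop) :
  hausdorff X -> hausdorff (subspace X A).
Proof.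
  intros HH x y Hxy.
  assert (Hne : proj1_sig x <> proj1_sig y) by (intro E; apply Hxy, proj1_sig_inj, E).
  destruct (HH _ _ Hne) as [U [V [HU [HV [Ux [Vy Hdisj]]]]]].
  exists (fun z : {x | A x} => U (proj1_sig z)), (fun z : {x | A x} => V (proj1_sig z)).
  split; [exists U; split; [exact HU | tauto]|].
  split; [exists V; split; [exact HV | tauto]|].
  split; [exact Ux|]. split; [exact Vy|]. intros z; apply Hdisj.
Qed.

Lemma subspace_completely_regular (X : space) (A : X -> Prop) :
  completely_regular X -> completely_regular (subspace X A).
Proof.
  intros HC F x [U [HU HFU]] Fx.
  assert (Ux : U (proj1_sig x)) by (apply HFU; exact Fx).
  assert (HclU : closed X (fun w => ~ U w)).
  { unfold closed. apply (open_ext X U); [intros w; split; [tauto | apply NNPP] | exact HU]. }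
  destruct (HC _ _ HclU (fun H => H Ux)) as [f [Hf [Hrange [Hf0 Hf1]]]].
  exists (fun z : {x | A x} => f (proj1_sig z)). split.
  - intros a. destruct (Hf a) as [Hgt Hlt]. split.
    + exists (fun w => Rlt a (f w)); split; [exact Hgt | tauto].
    + exists (fun w => Rlt (f w) a); split; [exact Hlt | tauto].
  - split; [intros; apply Hrange|]. split; [exact Hf0|].
    intros y Fy. apply Hf1. intros Uy. exact (proj2 (HFU y) Uy Fy).
Qed.

Lemma subspace_tychonoff (X : space) (A : X -> Prop) :
  tychonoff X -> tychonoff (subspace X A).
Proof.
  intros [HH HC]. split; [apply subspace_hausdorff | apply subspace_completely_regular]; assumption.
Qed.

Lemma compact_of_injective_bounded (W : space) (h : W -> nat) (n : nat) :
  (forall w, (h w < n)%nat) -> (forall w w', h w = h w' -> w = w') -> compact W.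
Proof.
  intros Hbound Hinj I U _ Hcov.
  assert (Hpartial : forall m, exists l : list I,
             forall w, (h w < m)%nat -> exists i, In i l /\ U i w).
  { induction m as [|m [l Hl]].
    - exists nil; intros w Hw; lia.
    - destruct (classic (exists w, h w = m)) as [[w Hw]|Hnone].
      + destruct (Hcov w) as [i Uiw]. exists (i :: l). intros w' Hw'.
        destruct (Nat.eq_dec (h w') m) as [E|E].
        * assert (w' = w) as -> by (apply Hinj; congruence).
          exists i; split; [left; reflexivity | exact Uiw].
        * destruct (Hl w') as [j [Hj Uj]]; [lia|].
          exists j; split; [right; exact Hj | exact Uj].
      + exists l. intros w' Hw'. apply Hl.
        destruct (Nat.eq_dec (h w') m); [exfalso; eauto | lia]. }
  destruct (Hpartial n) as [l Hl]. exists l. intros w. apply Hl, Hbound.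
Qed.

Lemma perfect_surj_of_homeomorphism (X Y : space) (g : X -> Y) :
  continuous g -> (forall x x', g x = g x' -> x = x') -> (forall y, exists x, g x = y) ->
  (forall U, is_open X U -> is_open Y (image g U)) -> perfect_surj g.
Proof.
  intros Hcont Hinj Hsurj Hopen. split; [exact Hcont|]. split; [|split; [exact Hsurj|]].
  - intros F HF. unfold closed. apply (open_ext Y (image g (fun x => ~ F x))); [|apply Hopen, HF].
    intros y; split.
    + intros [x [Fx <-]] [x' [Fx' E]]. apply Hinj in E as ->. tauto.
    + intros Hn. destruct (Hsurj y) as [x <-]. exists x. split; [|reflexivity].
      intros Fx. apply Hn. exists x; tauto.
  - intros y. apply (compact_of_injective_bounded _ (fun _ => 0%nat) 1); [intros; lia|].
    intros w w' _. apply proj1_sig_inj, Hinj. rewrite (proj2_sig w), (proj2_sig w'). reflexivity.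
Qed.

Section Copies.

Variable X : space.

Definition copies_open (U : nat * X -> Prop) : Prop :=
  forall k, is_open X (fun x => U (k, x)).

Lemma copies_open_ext : forall U V : nat * X -> Prop,
  (forall p, U p <-> V p) -> copies_open U -> copies_open V.
Proof. intros U V H HU k. apply (open_ext X (fun x => U (k, x))); [intros; apply H | apply HU]. Qed.

Lemma copies_open_full : copies_open (fun _ => True).
Proof. intros k; apply open_full. Qed.

Lemma copies_open_inter : forall U V, copies_open U -> copies_open V ->
  copies_open (fun p => U p /\ V p).
Proof. intros U V HU HV k. apply open_inter; [apply HU | apply HV]. Qed.

Lemma copies_open_union : forall (I : Type) (F : I -> nat * X -> Prop),
  (forall i, copies_open (F i)) -> copies_open (fun p => exists i, F i p).
Proof. intros I F HF k. apply (open_union X I (fun i x => F i (k, x))). intros i; apply HF. Qed.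

Definition copies : space :=
  Space (nat * X) copies_open copies_open_ext copies_open_full copies_open_inter copies_open_union.

Lemma copies_open_index (i : nat) : is_open copies (fun p : copies => fst p = i).
Proof. intros k; simpl; apply open_const. Qed.

Lemma copies_hausdorff : hausdorff X -> hausdorff copies.
Proof.
  intros HH [i x] [j y] Hne. destruct (Nat.eq_dec i j) as [<-|Hij].
  - assert (Hxy : x <> y) by congruence.
    destruct (HH _ _ Hxy) as [U [V [HU [HV [Ux [Vy Hdisj]]]]]].
    exists (fun p : nat * X => U (snd p)), (fun p : nat * X => V (snd p)).
    split; [intros k; exact HU|]. split; [intros k; exact HV|].
    split; [exact Ux|]. split; [exact Vy|]. intros z; apply Hdisj.
  - exists (fun p : nat * X => fst p = i), (fun p : nat * X => fst p = j).
    split; [apply copies_open_index|]. split; [apply copies_open_index|].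
    split; [reflexivity|]. split; [reflexivity|]. intros z [E1 E2]. congruence.
Qed.

Lemma copies_completely_regular : completely_regular X -> completely_regular copies.
Proof.
  intros HC F [i x] HF Fx.
  destruct (HC (fun y => F (i, y)) x (HF i) Fx) as [g [Hg [Hrange [Hg0 Hg1]]]].
  exists (fun p : nat * X => if Nat.eq_dec (fst p) i then g (snd p) else 1%R). split.
  - intros a. split; intros k; simpl; destruct (Nat.eq_dec k i);
      solve [apply (Hg a) | apply open_const].
  - split; [intros [k y]; simpl; destruct (Nat.eq_dec k i); [apply Hrange | lra]|].
    split; [simpl; destruct (Nat.eq_dec i i); [exact Hg0 | congruence]|].
    intros [k y] Fy; simpl. destruct (Nat.eq_dec k i) as [->|]; [apply Hg1, Fy | reflexivity].
Qed.

Lemma copies_tychonoff : tychonoff X -> tychonoff copies.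
Proof.
  intros [HH HC]. split; [apply copies_hausdorff | apply copies_completely_regular]; assumption.
Qed.

End Copies.

Section DisjointSum.

Variables (X : space) (n : nat) (A : nat -> X -> Prop).

Definition sum_carrier (p : nat * X) : Prop := (fst p < n)%nat /\ A (fst p) (snd p).

Definition disjoint_sum : space := subspace (copies X) sum_carrier.

Definition sum_proj (z : disjoint_sum) : X := snd (proj1_sig z).

Definition summand (i : nat) (z : disjoint_sum) : Prop := fst (proj1_sig z) = i.

Lemma disjoint_sum_tychonoff : tychonoff X -> tychonoff disjoint_sum.
Proof. intros HX. apply subspace_tychonoff, copies_tychonoff, HX. Qed.

Lemma summand_clopen (i : nat) :
  is_open disjoint_sum (summand i) /\ closed disjoint_sum (summand i).
Proof.
  split; [exists (fun p : nat * X => fst p = i) | exists (fun p : nat * X => fst p <> i)];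
    (split; [intros k; simpl; apply open_const | intros z; reflexivity]).
Qed.

(* Closedness of the image of F is tested summand by summand, which needs n to be finite. *)
Lemma sum_proj_perfect :
  (forall i, (i < n)%nat -> closed X (A i)) -> (forall x, exists i, (i < n)%nat /\ A i x) ->
  perfect_surj sum_proj.
Proof.
  intros Hcl Hcov. split; [|split; [|split]].
  - intros U HU. exists (fun p : nat * X => U (snd p)). split; [intros k; exact HU | tauto].
  - intros F [V [HV HFV]]. unfold closed.
    apply (open_ext X (fun y => forall i, (i < n)%nat -> ~ A i y \/ V (i, y))).
    + intros y. split.
      * intros H [[[i y'] [Hi Ai]] [Fz E]]. unfold sum_proj in E; simpl in E, Hi, Ai; subst y'.
        destruct (H i Hi) as [H'|H']; [exact (H' Ai)|].
        exact (proj2 (HFV (exist _ (i, y) (conj Hi Ai))) H' Fz).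
      * intros H i Hi. destruct (classic (A i y)) as [Ai|Ai]; [right | left; exact Ai].
        apply (proj1 (HFV (exist _ (i, y) (conj Hi Ai)))). intros Fz. apply H.
        exists (exist _ (i, y) (conj Hi Ai)). split; [exact Fz | reflexivity].
    + apply open_fin_inter. intros i Hi. apply open_or; [apply Hcl, Hi | apply HV].
  - intros y. destruct (Hcov y) as [i [Hi Ai]]. exists (exist _ (i, y) (conj Hi Ai)). reflexivity.
  - intros y.
    apply (compact_of_injective_bounded _
             (fun w : subspace disjoint_sum (fun z => sum_proj z = y) =>
                fst (proj1_sig (proj1_sig w))) n).
    + intros w. exact (proj1 (proj2_sig (proj1_sig w))).
    + intros [[[a b] Hab] Hw] [[[a' b'] Hab'] Hw'] E. apply proj1_sig_inj, proj1_sig_inj.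
      unfold sum_proj in Hw, Hw'. simpl in *. subst. reflexivity.
Qed.

Lemma summand_in_piece (i : nat) (w : subspace disjoint_sum (summand i)) :
  A i (snd (proj1_sig (proj1_sig w))).
Proof. destruct w as [[[k x] [Hk Ax]] E]. unfold summand in E. simpl in *. subst k. exact Ax. Qed.

Definition summand_to_piece (i : nat) (w : subspace disjoint_sum (summand i)) :
  subspace X (A i) := exist (A i) _ (summand_in_piece i w).

Lemma summand_to_piece_perfect (i : nat) : (i < n)%nat -> perfect_surj (summand_to_piece i).
Proof.
  intros Hi. apply perfect_surj_of_homeomorphism.
  - intros U [W [HW HUW]]. exists (fun z : disjoint_sum => W (snd (proj1_sig z))). split.
    + exists (fun p : nat * X => W (snd p)). split; [intros k; exact HW | tauto].
    + intros w. apply HUW.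
  - intros [[[a b] Hab] Hw] [[[a' b'] Hab'] Hw'] E.
    apply (f_equal (@proj1_sig _ _)) in E. unfold summand in Hw, Hw'.
    apply proj1_sig_inj, proj1_sig_inj. simpl in *. subst. reflexivity.
  - intros [y Ay]. exists (exist (summand i) (exist sum_carrier (i, y) (conj Hi Ay)) eq_refl).
    apply proj1_sig_inj. reflexivity.
  - intros U [W [[V [HV HWV]] HUW]].
    exists (fun x => V (i, x)). split; [apply HV|].
    intros [y Ay]. split.
    + intros [[[[k x] Hkx] Hw] [Uw E]]. apply HUW, HWV in Uw.
      apply (f_equal (@proj1_sig _ _)) in E. unfold summand in Hw. simpl in *. subst. exact Uw.
    + intros Vy. exists (exist (summand i) (exist sum_carrier (i, y) (conj Hi Ay)) eq_refl).
      split; [apply HUW, HWV, Vy | apply proj1_sig_inj; reflexivity].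
Qed.

End DisjointSum.

Lemma finite_closed_cover_property (P : space -> Prop) (X : space) (l : list (X -> Prop)) :
  finitely_additive P -> perfect_invariant P -> tychonoff X ->
  (forall K, In K l -> closed X K /\ P (subspace X K)) -> (forall x, exists K, In K l /\ K x) ->
  P X.
Proof.
  intros Hadd Hperf HX Hl Hcov.
  set (n := length l). set (A := fun i => nth i l (fun _ : X => False)).
  assert (HA : forall i, (i < n)%nat -> closed X (A i) /\ P (subspace X (A i)))
    by (intros i Hi; apply Hl, nth_In, Hi).
  assert (HcovA : forall x, exists i, (i < n)%nat /\ A i x).
  { intros x. destruct (Hcov x) as [K [HK Kx]]. destruct (In_nth l K (fun _ => False) HK) as [i [Hi <-]].
    exists i. split; assumption. }
  assert (HZ : tychonoff (disjoint_sum X n A)) by (apply disjoint_sum_tychonoff, HX).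
  apply (proj1 (Hperf _ _ _ HZ HX (sum_proj_perfect X n A (fun i Hi => proj1 (HA i Hi)) HcovA))).
  apply (Hadd _ HZ n (summand X n A)).
  - intros i _. apply summand_clopen.
  - intros i j z _ _ Hi Hj. unfold summand in *. congruence.
  - intros z. exists (fst (proj1_sig z)). split; [exact (proj1 (proj2_sig z)) | reflexivity].
  - intros i Hi.
    apply (proj2 (Hperf _ _ _ (subspace_tychonoff _ _ HZ) (subspace_tychonoff _ _ HX)
                         (summand_to_piece_perfect X n A i Hi))).
    apply HA, Hi.
Qed.

Lemma closure_full (X : space) (x : X) : closure X (fun _ => True) x.
Proof. intros U _ Ux. exists x; split; [exact Ux | exact I]. Qed.

Lemma cozero_full (X : space) : cozero X (fun _ => True).
Proof.
  exists (fun _ => 1%R). split.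
  - intros a; split; apply open_const.
  - intros x; split; [intros _; lra | tauto].
Qed.

Theorem lemma4p21 (P : space -> Prop) (X Y : space) (e : X -> Y) :
  compactness_like P -> tychonoff X -> stone_cech X Y e ->
  ((forall y : Y, lambdaP P X Y e y) <-> P X).
Proof.
  intros [Hclopen [Hadd [Hperf _]]] HX [HYc [_ [Hemb [Hdense _]]]]. split.
  - intros Hlambda.
    set (I := {C : X -> Prop | cozero X C /\ P (subspace X (closure X C))}).
    destruct (HYc I (fun c => interior Y (closure Y (image e (proj1_sig c))))) as [l Hl].
    + intros c. apply interior_open.
    + intros y. destruct (Hlambda y) as [C [HC [HP Hint]]]. exists (exist _ C (conj HC HP)). exact Hint.
    + apply (finite_closed_cover_property P X (map (fun c : I => closure X (proj1_sig c)) l));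
        [assumption .. | |].
      * intros K HK. apply in_map_iff in HK as [c [<- _]].
        split; [apply closure_closed | exact (proj2 (proj2_sig c))].
      * intros x. destruct (Hl (e x)) as [c [Hc [U [_ [Ux HU]]]]].
        exists (closure X (proj1_sig c)). split; [exact (in_map (fun c : I => closure X (proj1_sig c)) l c Hc)|].
        apply (closure_embedding X Y e _ _ Hemb), HU, Ux.
  - intros HPX y. exists (fun _ => True). split; [apply cozero_full|]. split.
    + apply Hclopen; [exact HX | exact HPX | |apply closure_closed].
      apply (open_ext X (fun _ => True)); [|apply open_full].
      intros x; split; [intros _; apply closure_full | tauto].
    + exists (fun _ => True). split; [apply open_full|]. split; [exact I|].
      intros z _. apply Hdense.
Qed.
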